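(* Fix $\lambda>0$. For a non-negative $n\times m$ matrix $M$ and positive vectors $\mathbf{r}\in(0,\infty)^n$, $\mathbf{c}\in(0,\infty)^m$, let $\Phi(M,\mathbf{r},\mathbf{c})$ denote the limit (when it exists) of $(\mathbf{r},\mathbf{c})$-Sinkhorn scaling applied to $M^{[\lambda]}$. Let $M$ be non-negative and $\mathbf{r},\mathbf{c}$ positive, and let $M^{\epsilon_1}$, $\mathbf{r}^{\epsilon_2}$, $\mathbf{c}^{\epsilon_3}$ be a non-negative matrix and positive vectors whose entries differ from those of $M$, $\mathbf{r}$, $\mathbf{c}$ by at most $\epsilon_1,\epsilon_2,\epsilon_3$ respectively. If $\Phi(M^{\epsilon_1},\mathbf{r}^{\epsilon_2},\mathbf{c}^{\epsilon_3})$ and $\Phi(M,\mathbf{r},\mathbf{c})$ exist, then $\Phi(M^{\epsilon_1},\mathbf{r}^{\epsilon_2},\mathbf{c}^{\epsilon_3})\to\Phi(M,\mathbf{r},\mathbf{c})$ as $M^{\epsilon_1}\to M$, $\mathbf{r}^{\epsilon_2}\to\mathbf{r}$, $\mathbf{c}^{\epsilon_3}\to\mathbf{c}$.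
   Context: $M^{[\lambda]}$ denotes the matrix with entries $(M_{ij})^{\lambda}$ (with $0^\lambda=0$). $(\mathbf{r},\mathbf{c})$-Sinkhorn scaling of a non-negative matrix $A$ is the iterated alternation of rescaling each row $i$ so that its sum equals $r_i$ and rescaling each column $j$ so that its sum equals $c_j$; its limit, when it exists, is a matrix with row sums $\mathbf{r}$ and column sums $\mathbf{c}$. Distances between vectors and matrices are measured in the $\ell^\infty$ norm (maximum entrywise difference). *)

From HB Require Import structures.
From mathcomp Require Import all_boot all_order all_algebra.
From mathcomp Require Import all_classical all_reals all_analysis.
Set Implicit Arguments. Unset Strict Implicit. Unset Printing Implicit Defensive.
Import Order.TTheory GRing.Theory Num.Theory.
Import numFieldNormedType.Exports.
Local Open Scope ring_scope.
Local Open Scope classical_set_scope.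

Section Sinkhorn.
Variables (R : realType) (n m : nat).

(* entrywise power M^[lam], with 0^lam = 0 for lam > 0 (powR 0 lam = 0) *)
Definition mx_pow (lam : R) (M : 'M[R]_(n, m)) : 'M[R]_(n, m) :=
  \matrix_(i, j) (M i j `^ lam).

Definition row_sum (A : 'M[R]_(n, m)) (i : 'I_n) : R := \sum_(j < m) A i j.
Definition col_sum (A : 'M[R]_(n, m)) (j : 'I_m) : R := \sum_(i < n) A i j.

Definition row_scale (r : 'I_n -> R) (A : 'M[R]_(n, m)) : 'M[R]_(n, m) :=
  \matrix_(i, j) (A i j * (r i / row_sum A i)).
Definition col_scale (c : 'I_m -> R) (A : 'M[R]_(n, m)) : 'M[R]_(n, m) :=
  \matrix_(i, j) (A i j * (c j / col_sum A j)).

(* the Sinkhorn half-step sequence: s 0 = A, s (2k+1) = row-scaling of s (2k),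
   s (2k+2) = column-scaling of s (2k+1) *)
Fixpoint sinkhorn_seq (r : 'I_n -> R) (c : 'I_m -> R) (A : 'M[R]_(n, m)) (k : nat)
  : 'M[R]_(n, m) :=
  match k with
  | 0 => A
  | k'.+1 => if odd k then row_scale r (sinkhorn_seq r c A k')
             else col_scale c (sinkhorn_seq r c A k')
  end.

Definition sinkhorn_defined (r : 'I_n -> R) (c : 'I_m -> R) (A : 'M[R]_(n, m)) : Prop :=
  forall k : nat,
    if ~~ odd k then forall i, row_sum (sinkhorn_seq r c A k) i != 0
    else forall j, col_sum (sinkhorn_seq r c A k) j != 0.

Definition sinkhorn_limit (lam : R) (M : 'M[R]_(n, m)) (r : 'I_n -> R) (c : 'I_m -> R)
  (P : 'M[R]_(n, m)) : Prop :=
  sinkhorn_defined r c (mx_pow lam M) /\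
  sinkhorn_seq r c (mx_pow lam M) @ \oo --> P.

Definition nonneg_mx (M : 'M[R]_(n, m)) : Prop := forall i j, 0 <= M i j.
Definition pos_vec (k : nat) (v : 'I_k -> R) : Prop := forall i, 0 < v i.

End Sinkhorn.

(* The Sinkhorn limit P of A = M^[lam] minimizes the relative entropy
   sum X ln (X / A) among the nonnegative matrices X with margins r, c that
   vanish where A does: the iterates are diagonal scalings of A, so on such X
   the relative entropies with respect to A and to an iterate differ by a
   constant, and Gibbs' inequality bounds the latter from below.
   For continuity, let perturbed data converge to (M, r, c); by compactness the
   perturbed limits Pk have a cluster point Q.  The matrix Pk + (P - Q) / 2 is
   admissible for the k-th problem, and comparing its entropy with that of the
   minimizer Pk shows in the limit that Q vanishes where A does and that Q is
   no better than (P + Q) / 2.  As P is optimal and x ln x is strictly convex,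
   Q = P. *)

From HB Require Import structures.
From mathcomp Require Import all_boot all_order all_algebra.
From mathcomp Require Import all_classical all_reals all_analysis.
From mathcomp Require Import ring lra.
Set Implicit Arguments.
Unset Strict Implicit.
Unset Printing Implicit Defensive.

Import Order.TTheory GRing.Theory Num.Theory.
Import numFieldNormedType.Exports.
Local Open Scope ring_scope.
Local Open Scope classical_set_scope.

Section xlnx.
Variable R : realType.
Implicit Types x y a b : R.

Lemma ln_lt_subr1 x : 0 < x -> x != 1 -> ln x < x - 1.
Proof.
move=> x0 x1; rewrite -ltr_expR lnK ?posrE //.
by have := @expR_gt1Dx R (x - 1); rewrite addrCA subrr addr0; apply; rewrite subr_eq0.
Qed.

Lemma gibbs_leif x y : 0 <= x -> 0 < y ->
  x - y <= x * ln x - x * ln y ?= iff (x == y).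
Proof.
move=> x0 y0; apply/leifP; have [->|xy] := eqVneq x y; first by rewrite !subrr.
move: x0; rewrite le_eqVlt => /predU1P[<-|x0]; first by rewrite !mul0r subrr sub0r oppr_lt0.
have yx1 : y / x != 1.
  by apply: contra xy => /eqP h; apply/eqP; rewrite -[y](divfK (lt0r_neq0 x0)) h mul1r.
have := ln_lt_subr1 (divr_gt0 y0 x0) yx1.
rewrite -(ltr_pM2l x0) ln_div ?posrE // !mulrBr mulrCA divff ?gt_eqF // !mulr1; lra.
Qed.

Lemma xlnx_midpoint_leif a b : 0 <= a -> 0 <= b ->
  0 <= a * ln a + b * ln b - 2 * ((a + b) / 2 * ln ((a + b) / 2)) ?= iff (a == b).
Proof.
move=> a0 b0; have m0 : 0 <= (a + b) / 2 by rewrite divr_ge0 ?addr_ge0.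
have [abm|] := eqVneq ((a + b) / 2) 0.
  have [-> ->] : a = 0 /\ b = 0 by move: abm; lra.
  by apply/leifP; rewrite eqxx !(mul0r, addr0, mulr0, subrr).
move=> m_neq0; have mpos : 0 < (a + b) / 2 by rewrite lt_neqAle eq_sym m_neq0.
rewrite mulrA (_ : 2 * _ = a + b); last by field.
have := leifD (gibbs_leif a0 mpos) (gibbs_leif b0 mpos).
rewrite (_ : a - _ + (b - _) = 0); last by field.
rewrite (_ : a * ln a - _ + _ = a * ln a + b * ln b - (a + b) * ln ((a + b) / 2)); last by ring.
rewrite (_ : (a == b) = (a == (a + b) / 2) && (b == (a + b) / 2)) //.
apply/eqP/andP => [<-|[/eqP ha /eqP hb]]; last exact: etrans ha (esym hb).
by rewrite (_ : (a + a) / 2 = a) ?eqxx //; field.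
Qed.

Lemma norm_xlnx_le x : x <= 1 -> `|x * ln x| <= 2 * Num.sqrt x.
Proof.
move=> x1; have [x0|x0] := leP x 0; first by rewrite ln0 // mulr0 normr0 mulr_ge0 ?sqrtr_ge0.
have s0 : 0 < Num.sqrt x by rewrite sqrtr_gt0.
have xE : x = Num.sqrt x * Num.sqrt x by rewrite -expr2 sqr_sqrtr // ltW.
have s1 : Num.sqrt x <= 1 by nra.
have := gibbs_leif (ltW s0) ltr01; rewrite ln1 mulr0 subr0 => -[hs _].
rewrite ler0_norm; last exact: mulr_ge0_le0 (ltW x0) (ln_le0 x1).
rewrite {1 2}xE lnM ?posrE //; nra.
Qed.

Lemma cvg_xlnx (u : R^nat) x : 0 <= x -> u @ \oo --> x ->
  (fun k => u k * ln (u k)) @ \oo --> x * ln x.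
Proof.
rewrite le_eqVlt => /predU1P[<-|x0] ux; last first.
  by apply: cvgM => //; exact: (continuous_cvg _ (continuous_ln x0) ux).
rewrite mul0r; apply/cvgrPdist_lt => e e0.
have /cvgrPdist_lt sqrt_u : (fun k => Num.sqrt (u k)) @ \oo --> 0.
  by rewrite -sqrtr0; exact: (continuous_cvg _ (@sqrt_continuous R 0) ux).
have /cvgrPdist_lt u_small := ux.
apply: filterS2 (u_small _ ltr01) (sqrt_u _ (divr_gt0 e0 (ltr0n R 2))) => k.
rewrite !sub0r !normrN => /ltW uk1; rewrite ger0_norm ?sqrtr_ge0 // => sk.
rewrite (le_lt_trans (norm_xlnx_le (le_trans (ler_norm _) uk1))) //; lra.
Qed.

End xlnx.

Lemma cvg_sum {K : numFieldType} {V : normedModType K} {T : Type}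
    (F : set_system T) {FF : Filter F} (I : finType) (f : I -> T -> V) (l : I -> V) :
  (forall i, f i x @[x --> F] --> l i) -> \sum_i f i x @[x --> F] --> \sum_i l i.
Proof. by move=> fl; apply: cvg_big => //; exact: add_continuous. Qed.

Lemma cvg_mx_entry {K : numFieldType} {T : Type} (F : set_system T) {FF : Filter F}
    p q (f : T -> 'M[K]_(p, q)) (A : 'M[K]_(p, q)) i j :
  f x @[x --> F] --> A -> f x i j @[x --> F] --> A i j.
Proof. by move=> fA; exact: (continuous_cvg _ (@coord_continuous _ _ _ i j A) fA). Qed.

Lemma increasing_seq_cvg (s : nat -> nat) : increasing_seq s -> s @ \oo --> \oo.
Proof.
move/increasing_seqP => s_lt; have s_ge k : (k <= s k)%N.
  by elim: k => // k ih; exact: leq_ltn_trans ih (s_lt k).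
move=> P [N _ PN]; exists N => // k /= Nk; apply: PN; exact: leq_trans Nk (s_ge k).
Qed.

Section real_sequences.
Variable R : realType.
Implicit Types u : R^nat.

Lemma cvg_harmonic_dist u a : (forall k, `|u k - a| <= k.+1%:R^-1) -> u @ \oo --> a.
Proof.
move=> ua; apply/cvgrPdist_le => e e0.
move/cvgrPdist_le: (@cvg_harmonic R) => /(_ e e0); apply: filterS => k.
by rewrite sub0r normrN ger0_norm ?harmonic_ge0 //= => /(le_trans (ua k)); rewrite distrC.
Qed.

Lemma cvg_powR u a p : 0 < p -> (forall k, 0 <= u k) -> u @ \oo --> a ->
  (fun k => u k `^ p) @ \oo --> a `^ p.
Proof.
move=> p0 u0 ua; have a0 : 0 <= a by apply: (cvgr_to_ge ua); exact: nearW.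
move: a0; rewrite le_eqVlt => /predU1P[a0|a0]; last first.
  have expR_cvg : (fun k => expR (p * ln (u k))) @ \oo --> a `^ p.
    rewrite /powR gt_eqF //; apply: (continuous_cvg _ (@continuous_expR R _)).
    by apply: cvgM; [exact: cvg_cst | exact: (continuous_cvg _ (continuous_ln a0) ua)].
  apply: (cvg_trans _ expR_cvg); apply: near_eq_cvg; near=> k.
  have uk : 0 < u k by near: k; exact: cvgr_gt _ ua _ a0.
  by rewrite /powR gt_eqF.
rewrite -a0 powR0 ?gt_eqF //; apply/cvgrPdist_lt => e e0.
have b0 : 0 < e `^ p^-1 by rewrite powR_gt0.
move/cvgrPdist_lt: ua => /(_ _ b0); apply: filterS => k.
rewrite -a0 sub0r normrN ger0_norm // => uk.
have eE : e = (e `^ p^-1) `^ p by rewrite -powRrM mulVf ?gt_eqF // powRr1 // ltW.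
rewrite sub0r normrN ger0_norm ?powR_ge0 // [X in _ < X]eE.
by apply: gt0_ltr_powR; rewrite ?nnegrE ?powR_ge0.
Unshelve. all: by end_near. Qed.

Lemma bolzano_weierstrass_seq (T : eqType) (u : nat -> T -> R) (s : seq T) :
  (forall t, t \in s -> bounded_fun (u ^~ t)) ->
  exists2 sg : nat -> nat, increasing_seq sg &
    exists q : T -> R, forall t, t \in s -> (fun k => u (sg k) t) @ \oo --> q t.
Proof.
elim: s => [_|t0 s IH bnd]; first by exists id => //; exists (fun=> 0).
have [sg sg_incr [q uq]] := IH (fun t ts => bnd t (mem_behead (s := t0 :: s) ts)).
have bnd0 : bounded_fun (fun k => u (sg k) t0).
  by move: (bnd t0 (mem_head _ _)); rewrite /= /bounded_near; apply: filterS => M uM k _; exact: uM.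
have [tau tau_incr /cvg_ex[l ul]] := bolzano_weierstrass bnd0.
exists (sg \o tau); first by move=> a b /=; rewrite sg_incr; exact: tau_incr.
exists (fun t => if t == t0 then l else q t) => t.
rewrite inE; case: eqP => [->|_] /= ts; first exact: ul.
exact: cvg_comp (increasing_seq_cvg tau_incr) (uq t ts).
Qed.

Lemma bolzano_weierstrass_mx n m (u : nat -> 'M[R]_(n, m)) :
  (forall i j, bounded_fun (fun k => u k i j)) ->
  exists2 sg : nat -> nat, increasing_seq sg &
    exists Q : 'M[R]_(n, m), forall i j, (fun k => u (sg k) i j) @ \oo --> Q i j.
Proof.
move=> bnd; have [|sg sg_incr [q uq]] :=
  @bolzano_weierstrass_seq _ (fun k (t : 'I_n * 'I_m) => u k t.1 t.2) (enum predT).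
  by move=> [i j] _; exact: bnd.
exists sg => //; exists (\matrix_(i, j) q (i, j)) => i j.
by rewrite mxE; apply: uq; rewrite mem_enum.
Qed.

Lemma near_cvg_mx n m (u : nat -> 'M[R]_(n, m)) (a : 'M[R]_(n, m))
    (b : 'I_n -> 'I_m -> R) :
  (forall i j, (fun k => u k i j) @ \oo --> a i j) ->
  \forall k \near \oo, forall i j,
    (b i j < a i j -> b i j < u k i j) /\ (a i j < b i j -> u k i j < b i j).
Proof.
move=> ua; apply: filter_forall => i; apply: filter_forall => j.
have [ba|ab|_] := ltgtP (b i j) (a i j); last exact: nearW.
- by apply: filterS (cvgr_gt _ (ua i j) _ ba) => k ?.
- by apply: filterS (cvgr_lt _ (ua i j) _ ab) => k ?.
Qed.

Lemma exists_delta_of_sequences (T : Type) (close : R -> T -> Prop) (good : T -> Prop) :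
  (forall x : nat -> T, (forall k, close k.+1%:R^-1 (x k)) -> exists k, good (x k)) ->
  exists2 delta : R, 0 < delta & forall t, close delta t -> good t.
Proof.
move=> seq_good; apply: contrapT => no_delta.
have /choice[x xP] : forall k : nat, exists t, close k.+1%:R^-1 t /\ ~ good t.
  move=> k; apply: contrapT => no_t; apply: no_delta; exists k.+1%:R^-1 => // t tc.
  by apply: contrapT => tg; apply: no_t; exists t.
have [k xk] := seq_good x (fun k => (xP k).1).
exact: (xP k).2 xk.
Qed.

End real_sequences.

Section rel_entropy.
Variables (R : realType) (n m : nat).
Implicit Types (A B X P Q : 'M[R]_(n, m)) (r : 'I_n -> R) (c : 'I_m -> R).

Definition rel_entropy X A : R :=
  \sum_i \sum_j (X i j * ln (X i j) - X i j * ln (A i j)).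

(* Since [ln 0 = 0], the value +oo of the relative entropy of a matrix charging
   a zero entry of [A] is encoded by the support constraint. *)
Definition transport_plan r c A X : Prop :=
  [/\ nonneg_mx X, forall i, row_sum X i = r i, forall j, col_sum X j = c j
    & forall i j, A i j = 0 -> X i j = 0].

Definition rel_entropy_minimizer r c A P : Prop :=
  transport_plan r c A P /\
  forall Q, transport_plan r c A Q -> rel_entropy P A <= rel_entropy Q A.

Lemma mass_le_rel_entropy X B : nonneg_mx X -> nonneg_mx B ->
    (forall i j, B i j = 0 -> X i j = 0) ->
  \sum_i \sum_j (X i j - B i j) <= rel_entropy X B.
Proof.
move=> X0 B0 XB; apply: ler_sum => i _; apply: ler_sum => j _.
have [Bij0|Bij_neq0] := eqVneq (B i j) 0; first by rewrite Bij0 (XB _ _ Bij0) !mul0r subrr.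
by apply: gibbs_leif; rewrite // lt_neqAle eq_sym Bij_neq0 B0.
Qed.

Lemma rel_entropy_scale r c A B X (x : 'I_n -> R) (y : 'I_m -> R) :
    (forall i, 0 < x i) -> (forall j, 0 < y j) ->
    (forall i j, B i j = A i j * x i * y j) -> nonneg_mx A -> transport_plan r c A X ->
  rel_entropy X A = rel_entropy X B + (\sum_i r i * ln (x i) + \sum_j c j * ln (y j)).
Proof.
move=> x0 y0 BE A0 [_ Xr Xc XA].
have lnB i j : X i j * ln (B i j) = X i j * ln (A i j) + X i j * ln (x i) + X i j * ln (y j).
  have [Aij0|Aij_neq0] := eqVneq (A i j) 0; first by rewrite (XA _ _ Aij0) !mul0r !addr0.
  have Aij0 : 0 < A i j by rewrite lt_neqAle eq_sym Aij_neq0 A0.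
  by rewrite BE !lnM ?posrE ?mulr_gt0 // !mulrDr.
have rows : \sum_i \sum_j X i j * ln (x i) = \sum_i r i * ln (x i).
  by apply: eq_bigr => i _; rewrite -mulr_suml -/(row_sum X i) Xr.
have cols : \sum_i \sum_j X i j * ln (y j) = \sum_j c j * ln (y j).
  by rewrite exchange_big; apply: eq_bigr => j _; rewrite -mulr_suml -/(col_sum X j) Xc.
have -> : rel_entropy X B =
    rel_entropy X A - \sum_i \sum_j (X i j * ln (x i) + X i j * ln (y j)).
  rewrite /rel_entropy -sumrB; apply: eq_bigr => i _.
  by rewrite -sumrB; apply: eq_bigr => j _; rewrite lnB; ring.
under eq_bigr do rewrite big_split /=.
by rewrite big_split /= rows cols; ring.
Qed.

Lemma rel_entropy_midpoint_leif A P Q : nonneg_mx P -> nonneg_mx Q ->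
  0 <= rel_entropy P A + rel_entropy Q A
         - 2 * rel_entropy (\matrix_(i, j) ((P i j + Q i j) / 2)) A ?= iff (P == Q).
Proof.
move=> P0 Q0.
have -> : (P == Q) = [forall i, [forall j, P i j == Q i j]].
  apply/eqP/forallP => [-> i|PQ]; first exact/forallP.
  by apply/matrixP => i j; apply/eqP; exact: (forallP (PQ i)).
rewrite /rel_entropy mulr_sumr -big_split -sumrB /=.
under eq_bigr do rewrite mulr_sumr -big_split -sumrB /=.
apply: leif_0_sum => i _; apply: leif_0_sum => j _.
rewrite mxE; set mid := (P i j + Q i j) / 2.
rewrite (_ : _ - _ = P i j * ln (P i j) + Q i j * ln (Q i j) - 2 * (mid * ln mid)).
  exact: xlnx_midpoint_leif.
by rewrite /mid; field.
Qed.

End rel_entropy.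

Section sinkhorn_iterates.
Variables (R : realType) (n m : nat) (r : 'I_n -> R) (c : 'I_m -> R) (A : 'M[R]_(n, m)).
Hypotheses (A0 : nonneg_mx A) (r0 : pos_vec r) (c0 : pos_vec c).
Hypothesis A_def : sinkhorn_defined r c A.
Local Notation s := (sinkhorn_seq r c A).

Lemma sinkhorn_seq_scaling k : exists (x : 'I_n -> R) (y : 'I_m -> R),
  [/\ forall i, 0 < x i, forall j, 0 < y j & forall i j, s k i j = A i j * x i * y j].
Proof.
elim: k => [|k [x [y [x0 y0 skE]]]].
  by exists (fun=> 1), (fun=> 1); split => // i j; rewrite !mulr1.
have sk0 i j : 0 <= s k i j by rewrite skE !mulr_ge0 // ltW.
have := A_def k; rewrite /=; case: (odd k) => /= sum_neq0.
- exists x, (fun j => y j * (c j / col_sum (s k) j)); split => // [j|i j]; last first.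
    by rewrite mxE skE; ring.
  by rewrite mulr_gt0 ?divr_gt0 // lt_neqAle eq_sym sum_neq0 sumr_ge0.
- exists (fun i => x i * (r i / row_sum (s k) i)), y; split => // [i|i j]; last first.
    by rewrite mxE skE; ring.
  by rewrite mulr_gt0 ?divr_gt0 // lt_neqAle eq_sym sum_neq0 sumr_ge0.
Qed.

Lemma row_sum_sinkhorn_odd k i : row_sum (s k.*2.+1) i = r i.
Proof.
have := A_def k.*2; rewrite /= odd_double /= => /(_ i) sum_neq0.
rewrite /row_sum; under eq_bigr do rewrite mxE.
by rewrite -mulr_suml mulrCA divff // mulr1.
Qed.

Lemma col_sum_sinkhorn_even k j : col_sum (s k.*2.+2) j = c j.
Proof.
have := A_def k.*2.+1; rewrite /= odd_double /= => /(_ j) sum_neq0.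
rewrite /col_sum; under eq_bigr do rewrite mxE.
by rewrite -mulr_suml mulrCA divff // mulr1.
Qed.

Variable P : 'M[R]_(n, m).
Hypothesis sP : s @ \oo --> P.

Lemma sinkhorn_limit_plan : transport_plan r c A P.
Proof.
have sPij i j : (fun k => s k i j) @ \oo --> P i j by exact: cvg_mx_entry.
have odd_cvg : (fun k => k.*2.+1) @ \oo --> \oo.
  by apply: increasing_seq_cvg => a b; rewrite leEnat ltnS leq_double.
have even_cvg : (fun k => k.*2.+2) @ \oo --> \oo.
  by apply: increasing_seq_cvg => a b; rewrite leEnat !ltnS leq_double.
split.
- move=> i j; apply: (cvgr_to_ge (sPij i j)); apply: nearW => k.
  by have [x [y [x0 y0 ->]]] := sinkhorn_seq_scaling k; rewrite !mulr_ge0 // ltW.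
- move=> i; have sum_cvg : (fun k => row_sum (s k.*2.+1) i) @ \oo --> row_sum P i.
    apply: (cvg_comp _ (fun k => row_sum (s k) i) odd_cvg).
    by apply: cvg_sum => j; exact: sPij.
  rewrite (funext (row_sum_sinkhorn_odd ^~ i)) in sum_cvg.
  exact: cvg_unique _ sum_cvg (cvg_cst _).
- move=> j; have sum_cvg : (fun k => col_sum (s k.*2.+2) j) @ \oo --> col_sum P j.
    apply: (cvg_comp _ (fun k => col_sum (s k) j) even_cvg).
    by apply: cvg_sum => i; exact: sPij.
  rewrite (funext (col_sum_sinkhorn_even ^~ j)) in sum_cvg.
  exact: cvg_unique _ sum_cvg (cvg_cst _).
- move=> i j Aij0; have := sPij i j.
  have -> : (fun k => s k i j) = fun=> 0.
    by apply: funext => k; have [x [y [_ _ ->]]] := sinkhorn_seq_scaling k; rewrite Aij0 !mul0r.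
  by move=> s0; exact: cvg_unique _ s0 (cvg_cst _).
Qed.

Lemma sinkhorn_limit_minimizer : rel_entropy_minimizer r c A P.
Proof.
have Pplan := sinkhorn_limit_plan; split => // Q Qplan.
have [P0 Pr _ _] := Pplan; have [Q0 Qr _ QA] := Qplan.
have sPij i j : (fun k => s k i j) @ \oo --> P i j by exact: cvg_mx_entry.
pose d k := \sum_i r i - \sum_i \sum_j s k i j - rel_entropy P (s k).
have d_le k : d k <= rel_entropy Q A - rel_entropy P A.
  have [x [y [x0 y0 skE]]] := sinkhorn_seq_scaling k.
  rewrite (rel_entropy_scale x0 y0 skE A0 Qplan) (rel_entropy_scale x0 y0 skE A0 Pplan).
  have : \sum_i \sum_j (Q i j - s k i j) <= rel_entropy Q (s k).
    apply: mass_le_rel_entropy => // [i j|i j]; first by rewrite skE !mulr_ge0 // ltW.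
    by rewrite skE => /eqP; rewrite !mulf_eq0 (gt_eqF (x0 i)) (gt_eqF (y0 j)) !orbF => /eqP/QA.
  under eq_bigr do rewrite sumrB -/(row_sum Q _) Qr.
  rewrite sumrB /d; lra.
have relP_cvg : (fun k => rel_entropy P (s k)) @ \oo --> rel_entropy P P.
  apply: cvg_sum => i; apply: cvg_sum => j; apply: cvgB; first exact: cvg_cst.
  have [->|Pij_neq0] := eqVneq (P i j) 0.
    by rewrite mul0r; under eq_cvg do rewrite mul0r; exact: cvg_cst.
  apply: cvgM; first exact: cvg_cst.
  by apply: (continuous_cvg _ (continuous_ln _) (sPij i j)); rewrite lt_neqAle eq_sym Pij_neq0 P0.
have d_cvg : d @ \oo --> \sum_i r i - \sum_i \sum_j P i j - rel_entropy P P.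
  apply: cvgB => //; apply: cvgB; first exact: cvg_cst.
  by apply: cvg_sum => i; apply: cvg_sum => j; exact: sPij.
have sumP : \sum_i \sum_j P i j = \sum_i r i by apply: eq_bigr => i _; exact: Pr.
have relPP : rel_entropy P P = 0.
  by rewrite /rel_entropy big1 // => i _; rewrite big1 // => j _; exact: subrr.
rewrite sumP relPP subrr subr0 in d_cvg.
by rewrite -subr_ge0; apply: (cvgr_to_le d_cvg); exact: nearW.
Qed.

End sinkhorn_iterates.

Section rel_entropy_minimizer_stability.
(* Keeps the entry indices of the convergence hypotheses explicit. *)
Local Unset Implicit Arguments.
Variables (R : realType) (n m : nat).
Variables (A P : 'M[R]_(n, m)) (r : 'I_n -> R) (c : 'I_m -> R).
Hypotheses (A0 : nonneg_mx A) (P_min : rel_entropy_minimizer r c A P).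
Variables (Ak Pk : nat -> 'M[R]_(n, m)) (rk : nat -> 'I_n -> R) (ck : nat -> 'I_m -> R).
Hypothesis Ak0 : forall k, nonneg_mx (Ak k).
Hypothesis Pk_min : forall k, rel_entropy_minimizer (rk k) (ck k) (Ak k) (Pk k).
Hypothesis Ak_cvg : forall i j, (fun k => Ak k i j) @ \oo --> A i j.
Hypothesis rk_cvg : forall i, (fun k => rk k i) @ \oo --> r i.
Hypothesis ck_cvg : forall j, (fun k => ck k j) @ \oo --> c j.
Variable Q : 'M[R]_(n, m).
Hypothesis Pk_cvg : forall i j, (fun k => Pk k i j) @ \oo --> Q i j.

Let Pk_shift k : 'M[R]_(n, m) := \matrix_(i, j) (Pk k i j + (P i j - Q i j) / 2).
Let Mid : 'M[R]_(n, m) := \matrix_(i, j) ((P i j + Q i j) / 2).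

Lemma minimizer_limit_nonneg : nonneg_mx Q.
Proof.
move=> i j; apply: (cvgr_to_ge (Pk_cvg i j)); apply: nearW => k.
by have [[Pk0 _ _ _] _] := Pk_min k.
Qed.

Lemma minimizer_limit_row_sum i : row_sum Q i = r i.
Proof.
have : (fun k => row_sum (Pk k) i) @ \oo --> row_sum Q i.
  by apply: cvg_sum => j; exact: Pk_cvg.
have -> : (fun k => row_sum (Pk k) i) = fun k => rk k i.
  by apply: funext => k; have [[_ -> _ _] _] := Pk_min k.
by move=> rQ; exact: cvg_unique _ rQ (rk_cvg i).
Qed.

Lemma minimizer_limit_col_sum j : col_sum Q j = c j.
Proof.
have : (fun k => col_sum (Pk k) j) @ \oo --> col_sum Q j.
  by apply: cvg_sum => i; exact: Pk_cvg.
have -> : (fun k => col_sum (Pk k) j) = fun k => ck k j.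
  by apply: funext => k; have [[_ _ -> _] _] := Pk_min k.
by move=> cQ; exact: cvg_unique _ cQ (ck_cvg j).
Qed.

Lemma near_perturbed_plan :
  \forall k \near \oo, transport_plan (rk k) (ck k) (Ak k) (Pk_shift k).
Proof.
have [[P0 Pr Pc PA] _] := P_min.
apply: filterS2 (near_cvg_mx (fun _ _ => 0) Ak_cvg)
  (near_cvg_mx (fun i j => Q i j / 2) Pk_cvg).
move=> k Ak_pos Pk_gt; have [[Pk0 Pkr Pkc PkA] _] := Pk_min k.
have Pk_Q i j : 0 < Q i j -> Q i j / 2 < Pk k i j.
  by move=> Qij0; apply: (Pk_gt i j).1; lra.
split => [i j|i|j|i j Akij0].
- rewrite mxE; have := P0 i j; have := Pk0 i j; have := minimizer_limit_nonneg i j.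
  by have [/Pk_Q|] := ltP 0 (Q i j); lra.
- rewrite /row_sum; under eq_bigr do rewrite mxE.
  rewrite big_split /= -mulr_suml sumrB -!/(row_sum _ i) Pkr Pr minimizer_limit_row_sum.
  by rewrite subrr mul0r addr0.
- rewrite /col_sum; under eq_bigr do rewrite mxE.
  rewrite big_split /= -mulr_suml sumrB -!/(col_sum _ j) Pkc Pc minimizer_limit_col_sum.
  by rewrite subrr mul0r addr0.
- have Aij0 : A i j = 0.
    apply/eqP; rewrite eq_le A0 andbT leNgt; apply/negP => /(Ak_pos i j).1.
    by rewrite Akij0 ltxx.
  have Qij0 : Q i j = 0.
    apply/eqP; rewrite eq_le minimizer_limit_nonneg andbT leNgt; apply/negP => /Pk_Q.
    by rewrite PkA //; have := minimizer_limit_nonneg i j; lra.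
  by rewrite mxE PkA // PA // Qij0 subrr mul0r addr0.
Qed.

Let gap_regular k := \sum_i \sum_j (Pk_shift k i j * ln (Pk_shift k i j) - Pk k i j * ln (Pk k i j)
  - (if A i j == 0 then 0 else (P i j - Q i j) / 2 * ln (Ak k i j))).
Let gap_singular k := \sum_i \sum_j (if A i j == 0 then Q i j / 2 * ln (Ak k i j) else 0).

Lemma rel_entropy_perturbed_gap k :
  rel_entropy (Pk_shift k) (Ak k) - rel_entropy (Pk k) (Ak k) = gap_regular k + gap_singular k.
Proof.
have [[_ _ _ PA] _] := P_min.
rewrite /rel_entropy /gap_regular /gap_singular -sumrB -big_split; apply: eq_bigr => i _.
rewrite -sumrB -big_split; apply: eq_bigr => j _ /=; rewrite !mxE.
by case: eqP => [/PA->|_]; ring.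
Qed.

Lemma near_perturbed_gap_ge0 : \forall k \near \oo, 0 <= gap_regular k + gap_singular k.
Proof.
apply: filterS near_perturbed_plan => k shift_plan.
by rewrite -rel_entropy_perturbed_gap subr_ge0; exact: (Pk_min k).2.
Qed.

Lemma gap_regular_cvg : gap_regular @ \oo --> rel_entropy Mid A - rel_entropy Q A.
Proof.
have [[P0 _ _ _] _] := P_min.
have -> : rel_entropy Mid A - rel_entropy Q A = \sum_i \sum_j (Mid i j * ln (Mid i j)
    - Q i j * ln (Q i j) - (if A i j == 0 then 0 else (P i j - Q i j) / 2 * ln (A i j))).
  rewrite /rel_entropy -sumrB; apply: eq_bigr => i _; rewrite -sumrB; apply: eq_bigr => j _.
  by rewrite mxE; case: eqP => [->|_]; rewrite ?(ln0 (lexx 0)); field.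
apply: cvg_sum => i; apply: cvg_sum => j; apply: cvgB; first apply: cvgB.
- apply: cvg_xlnx; first by rewrite mxE divr_ge0 ?addr_ge0 ?P0 ?minimizer_limit_nonneg.
  rewrite mxE (_ : (P i j + Q i j) / 2 = Q i j + (P i j - Q i j) / 2); last by field.
  by under eq_cvg do rewrite mxE; apply: cvgD; [exact: Pk_cvg | exact: cvg_cst].
- exact: cvg_xlnx (minimizer_limit_nonneg i j) (Pk_cvg i j).
case: eqP => [_|Aij_neq0]; first exact: cvg_cst.
apply: cvgM; first exact: cvg_cst.
apply: (continuous_cvg _ (continuous_ln _) (Ak_cvg i j)).
by rewrite lt_neqAle eq_sym; apply/andP; split; [exact/eqP | exact: A0].
Qed.

Lemma near_gap_singular_terms_le0 : \forall k \near \oo, forall i j,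
  (if A i j == 0 then Q i j / 2 * ln (Ak k i j) else 0) <= 0.
Proof.
apply: filterS (near_cvg_mx (fun _ _ => 1) Ak_cvg) => k Ak_lt1 i j.
case: eqP => // Aij0; apply: mulr_ge0_le0; first by rewrite divr_ge0 ?minimizer_limit_nonneg.
by apply/ln_le0/ltW/(Ak_lt1 i j).2; rewrite Aij0 ltr01.
Qed.

(* Where [A] vanishes, [ln (Ak k i j)] tends to -oo, so a positive [Q i j]
   would drive the nonnegative gap [gap_regular k + gap_singular k] below 0. *)
Lemma minimizer_limit_support i j : A i j = 0 -> Q i j = 0.
Proof.
move=> Aij0; apply/eqP; rewrite eq_le minimizer_limit_nonneg andbT leNgt; apply/negP => Qij0.
have Q2 : 0 < Q i j / 2 by rewrite divr_gt0.
pose C := rel_entropy Mid A - rel_entropy Q A + 1.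
have C_gt : rel_entropy Mid A - rel_entropy Q A < C by rewrite ltrDl.
have Q_gt : Q i j / 2 < Q i j by lra.
have A_lt : A i j < expR (- C / (Q i j / 2)) by rewrite Aij0 expR_gt0.
suff : \forall k \near \oo, False by move/filter_const.
near=> k.
have regular_lt : gap_regular k < C by near: k; exact: cvgr_lt _ gap_regular_cvg _ C_gt.
have gap_ge0 : 0 <= gap_regular k + gap_singular k by near: k; exact: near_perturbed_gap_ge0.
have singular_le : gap_singular k <= Q i j / 2 * ln (Ak k i j).
  have singular_le0 : forall i j, (if A i j == 0 then Q i j / 2 * ln (Ak k i j) else 0) <= 0.
    by near: k; exact: near_gap_singular_terms_le0.
  rewrite /gap_singular (bigD1 i) //= (bigD1 j) //= Aij0 eqxx -addrA gerDl.
  apply: ler_wnDl; first by apply: sumr_le0 => j' _; exact: singular_le0.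
  by apply: sumr_le0 => i' _; apply: sumr_le0 => j' _; exact: singular_le0.
have Pk_gt : Q i j / 2 < Pk k i j by near: k; exact: cvgr_gt _ (Pk_cvg i j) _ Q_gt.
have Ak_pos : 0 < Ak k i j.
  rewrite lt_neqAle Ak0 andbT eq_sym; apply/eqP => Akij0.
  have [[_ _ _ PkA] _] := Pk_min k.
  by move: Pk_gt; rewrite PkA //; lra.
have Ak_small : Ak k i j < expR (- C / (Q i j / 2)).
  by near: k; exact: cvgr_lt _ (Ak_cvg i j) _ A_lt.
have : ln (Ak k i j) < - C / (Q i j / 2) by rewrite -ltr_expR lnK ?posrE.
rewrite -(ltr_pM2l Q2) mulrCA divff ?gt_eqF // mulr1; lra.
Unshelve. all: by end_near. Qed.

Lemma minimizer_limit_le_midpoint : rel_entropy Q A <= rel_entropy Mid A.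
Proof.
rewrite -subr_ge0; apply: (cvgr_to_ge gap_regular_cvg).
apply: filterS2 near_perturbed_gap_ge0 near_gap_singular_terms_le0 => k gap_ge0 singular_le0.
have : gap_singular k <= 0.
  by apply: sumr_le0 => i _; apply: sumr_le0 => j _; exact: singular_le0.
lra.
Qed.

Theorem cvg_rel_entropy_minimizer : Q = P.
Proof.
have [[P0 _ _ _] P_le] := P_min.
have Q_plan : transport_plan r c A Q.
  split; [exact: minimizer_limit_nonneg | exact: minimizer_limit_row_sum |
           exact: minimizer_limit_col_sum | exact: minimizer_limit_support].
have := P_le Q Q_plan; have := minimizer_limit_le_midpoint.
have /lt_leif := rel_entropy_midpoint_leif A P0 minimizer_limit_nonneg.
rewrite -/Mid => midE Q_le P_le_Q; apply/esym/eqP; rewrite -[P == Q]negbK -midE -leNgt.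
lra.
Qed.

End rel_entropy_minimizer_stability.

Lemma mx_pow_nonneg (R : realType) n m (lam : R) (M : 'M[R]_(n, m)) :
  nonneg_mx (mx_pow lam M).
Proof. by move=> i j; rewrite mxE powR_ge0. Qed.

Lemma sinkhorn_limit_cluster (R : realType) n m (lam : R) (M : 'M[R]_(n, m))
    (r : 'I_n -> R) (c : 'I_m -> R) (P : 'M[R]_(n, m))
    (Ms Ps : nat -> 'M[R]_(n, m)) (rs : nat -> 'I_n -> R) (cs : nat -> 'I_m -> R) :
  0 < lam -> pos_vec r -> pos_vec c -> sinkhorn_limit lam M r c P ->
  (forall k, nonneg_mx (Ms k)) -> (forall k, pos_vec (rs k)) -> (forall k, pos_vec (cs k)) ->
  (forall k, sinkhorn_limit lam (Ms k) (rs k) (cs k) (Ps k)) ->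
  (forall i j, (fun k => Ms k i j) @ \oo --> M i j) ->
  (forall i, (fun k => rs k i) @ \oo --> r i) -> (forall j, (fun k => cs k j) @ \oo --> c j) ->
  forall eps, 0 < eps -> exists k, forall i j, `|Ps k i j - P i j| < eps.
Proof.
move=> lam0 r0 c0 [M_def sP] Ms0 rs0 cs0 Ps_lim Ms_cvg rs_cvg cs_cvg eps eps0.
have P_min := sinkhorn_limit_minimizer (mx_pow_nonneg lam M) r0 c0 M_def sP.
have Ps_min k := sinkhorn_limit_minimizer (mx_pow_nonneg lam (Ms k)) (rs0 k) (cs0 k)
  (Ps_lim k).1 (Ps_lim k).2.
have Ps_bnd i j : bounded_fun (fun k => Ps k i j).
  move: (cvg_seq_bounded (cvgP _ (rs_cvg i))); rewrite /= /bounded_near.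
  apply: filterS => B rsB k _ /=; have [[Ps0 Psr _ _] _] := Ps_min k.
  rewrite ger0_norm // (le_trans _ (le_trans (ler_norm _) (rsB k I))) // -Psr.
  by rewrite /row_sum (bigD1 j) //= lerDl sumr_ge0.
have [sg sg_incr [Q PsQ]] := bolzano_weierstrass_mx Ps_bnd.
have sg_cvg := increasing_seq_cvg sg_incr.
have QP : Q = P.
  apply: (@cvg_rel_entropy_minimizer _ _ _ _ _ _ _ (mx_pow_nonneg lam M) P_min
    (fun k => mx_pow lam (Ms (sg k))) (Ps \o sg) (rs \o sg) (cs \o sg)) => // [k|k|i j|i|j].
  - exact: mx_pow_nonneg.
  - exact: Ps_min.
  - rewrite mxE; under eq_cvg do rewrite mxE.
    by apply: cvg_powR lam0 (fun k => Ms0 (sg k) i j) _; exact: cvg_comp sg_cvg (Ms_cvg i j).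
  - exact: cvg_comp sg_cvg (rs_cvg i).
  - exact: cvg_comp sg_cvg (cs_cvg j).
have : \forall k \near \oo, forall i j, `|Ps (sg k) i j - P i j| < eps.
  apply: filter_forall => i; apply: filter_forall => j; rewrite -QP.
  by move/cvgrPdist_lt: (PsQ i j) => /(_ _ eps0); apply: filterS => k; rewrite distrC.
by move=> /filter_ex[k Psk]; exists (sg k).
Qed.

Theorem proposition4 (R : realType) (n m : nat) (lam : R) (hlam : 0 < lam)
  (M : 'M[R]_(n, m)) (r : 'I_n -> R) (c : 'I_m -> R) (P : 'M[R]_(n, m))
  (hM : nonneg_mx M) (hr : pos_vec r) (hc : pos_vec c)
  (hP : sinkhorn_limit lam M r c P) :
  forall eps : R, 0 < eps ->
  exists2 delta : R, 0 < delta &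
    forall (M' : 'M[R]_(n, m)) (r' : 'I_n -> R) (c' : 'I_m -> R) (P' : 'M[R]_(n, m)),
      nonneg_mx M' -> pos_vec r' -> pos_vec c' ->
      (forall i j, `|M' i j - M i j| <= delta) ->
      (forall i, `|r' i - r i| <= delta) ->
      (forall j, `|c' j - c j| <= delta) ->
      sinkhorn_limit lam M' r' c' P' ->
      forall i j, `|P' i j - P i j| < eps.
Proof.
move=> eps eps0.
pose close (delta : R) (t : 'M[R]_(n, m) * ('I_n -> R) * ('I_m -> R) * 'M[R]_(n, m)) :=
  [/\ nonneg_mx t.1.1.1, pos_vec t.1.1.2, pos_vec t.1.2,
      sinkhorn_limit lam t.1.1.1 t.1.1.2 t.1.2 t.2 &
      [/\ forall i j, `|t.1.1.1 i j - M i j| <= delta,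
          forall i, `|t.1.1.2 i - r i| <= delta & forall j, `|t.1.2 j - c j| <= delta]].
have [x x_close|delta delta0 delta_good] :=
  exists_delta_of_sequences (close := close)
    (good := fun t => forall i j, `|t.2 i j - P i j| < eps).
  apply: (sinkhorn_limit_cluster (Ms := fun k => (x k).1.1.1) (rs := fun k => (x k).1.1.2)
    (cs := fun k => (x k).1.2) hlam hr hc hP _ _ _ _ _ _ _ eps0) => [k|k|k|k|i j|i|j];
    try by case: (x_close k).
  - by apply: cvg_harmonic_dist => k; case: (x_close k) => _ _ _ _ [dM _ _]; exact: dM.
  - by apply: cvg_harmonic_dist => k; case: (x_close k) => _ _ _ _ [_ dr _]; exact: dr.
  - by apply: cvg_harmonic_dist => k; case: (x_close k) => _ _ _ _ [_ _ dc]; exact: dc.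
exists delta => // M' r' c' P' *.
by apply: (delta_good (M', r', c', P')); split.
Qed.
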